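(* Let $2\le d_1\le d_2\le d_3\le d_4$, let $\rho$ be any (normalized) mixed state on $H_1\otimes H_2\otimes H_3\otimes H_4$ with $\dim H_i=d_i$, let $2\le m\le d_1$, and let $p_2,\dots,p_m\in[0,1]$ with $\sum_{s=2}^mp_s=1$. Then $$C^2(\rho)\ \ge\ \sum_{s=2}^{m}\frac{p_s}{\binom{d_1-2}{s-2}\binom{d_2-2}{s-2}\binom{d_3-1}{s-1}\binom{d_4-1}{s-1}}\sum_{\rho_{s\otimes s\otimes s\otimes s}}C^2(\rho_{s\otimes s\otimes s\otimes s}),$$ where for each $s$ the inner sum runs over all possible $s\otimes s\otimes s\otimes s$ substates of $\rho$.
   Context: Each $H_i\cong\mathbb{C}^{d_i}$ has a fixed computational basis. $C$ denotes the four-partite concurrence: for a (not necessarily normalized) vector $|\varphi\rangle$ with $\sigma=|\varphi\rangle\langle\varphi|$, $C(|\varphi\rangle)=2^{-1}\sqrt{14(\mathrm{tr}\,\sigma)^2-\sum_\alpha\mathrm{tr}(\sigma_\alpha^2)}$, $\alpha$ running over the 14 nonempty proper subsets of $\{1,2,3,4\}$ and $\sigma_\alpha=\mathrm{tr}_{\bar\alpha}\sigma$; for a (possibly unnormalized) positive semidefinite $\sigma$, $C(\sigma)=\min\sum_iC(|\psi_i\rangle)$ over all decompositions $\sigma=\sum_i|\psi_i\rangle\langle\psi_i|$ into unnormalized vectors. Substates: given subsets $S_i\subseteq\{1,\dots,d_i\}$ with $|S_i|=s$ and projectors $G_i=\sum_{x\in S_i}|x\rangle\langle x|$, the $s\otimes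 s\otimes s\otimes s$ substate of $\rho$ is the unnormalized operator $(G_1\otimes G_2\otimes G_3\otimes G_4)\rho(G_1\otimes G_2\otimes G_3\otimes G_4)$. $\binom{n}{k}=n!/(k!(n-k)!)$. *)

From HB Require Import structures.
From mathcomp Require Import all_boot all_order all_algebra.
From mathcomp Require Import boolp classical_sets reals.
From mathcomp Require Import complex.
Set Implicit Arguments. Unset Strict Implicit. Unset Printing Implicit Defensive.
Import Order.TTheory GRing.Theory Num.Theory.
Local Open Scope ring_scope.

Section FourPartite.
Variable R : realType.
Local Notation C := R[i].

Definition dims (d1 d2 d3 d4 : nat) (k : 'I_4) : nat := nth 0%N [:: d1; d2; d3; d4] k.

(* computational basis of H_1 (x) H_2 (x) H_3 (x) H_4 : tuples (x_1,...,x_4), x_k < d_k *)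
Definition basis4 (d : 'I_4 -> nat) := {dffun forall k : 'I_4, 'I_(d k)}.

Variable d : 'I_4 -> nat.
Local Notation T := (basis4 d).

Definition vec := T -> C.
Definition op := T -> T -> C.

Definition outer (v : vec) : op := fun x y => v x * (v y)^*.
Definition trace (s : op) : C := \sum_(x : T) s x x.

Definition psd (s : op) : Prop :=
  forall v : vec, 0 <= \sum_(x : T) \sum_(y : T) (v x)^* * s x y * v y.

Definition density (s : op) : Prop := psd s /\ trace s = 1.

Definition mix (alpha : {set 'I_4}) (u v : T) : T :=
  [ffun k => if k \in alpha then u k else v k].

(* tr((tr_{bar alpha} s)^2): writing x = (a,b), y = (a',b') with a,a' the
   alpha-coordinates, (tr_{bar alpha} s)(a,a') = sum_b s((a,b),(a',b)), hence
   tr(s_alpha^2) = sum_{a,a',b,b'} s((a,b),(a',b)) s((a',b'),(a,b')). *)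
Definition tr_red_sq (alpha : {set 'I_4}) (s : op) : C :=
  \sum_(x : T) \sum_(y : T) s x (mix alpha y x) * s y (mix alpha x y).

Definition proper_nonempty (alpha : {set 'I_4}) : bool :=
  (alpha != finset.set0) && (alpha != [set: 'I_4]).

Definition conc_vec (phi : vec) : R :=
  Num.sqrt (@complex.Re R (14%:R * (trace (outer phi)) ^+ 2
                 - \sum_(alpha : {set 'I_4} | proper_nonempty alpha)
                      tr_red_sq alpha (outer phi))) / 2%:R.

Definition decomposition (s : op) (psis : seq vec) : Prop :=
  forall x y, s x y = \sum_(psi <- psis) outer psi x y.

(* concurrence of a (possibly unnormalized) PSD operator: min (= inf) over
   all pure-state decompositions into unnormalized vectors *)
Definition conc (s : op) : R :=
  inf [set r : R | exists psis : seq vec,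
          decomposition s psis /\ r = \sum_(psi <- psis) conc_vec psi]%classic.

(* projector data G_k = sum_{x in S_k} |x><x| *)
Definition subsel := {dffun forall k : 'I_4, {set 'I_(d k)}}.

Definition in_sel (S : subsel) (x : T) : bool := [forall k, x k \in S k].

(* the substate (G_1 (x) ... (x) G_4) rho (G_1 (x) ... (x) G_4) *)
Definition substate (S : subsel) (rho : op) : op :=
  fun x y => if in_sel S x && in_sel S y then rho x y else 0.

Definition sel_size (s : nat) (S : subsel) : bool := [forall k, #|S k| == s].

End FourPartite.

From HB Require Import structures.
From mathcomp Require Import all_boot all_order all_algebra.
From mathcomp Require Import classical_sets reals.
From mathcomp Require Import complex.
From mathcomp Require Import ring lra zify.
Set Implicit Arguments. Unset Strict Implicit. Unset Printing Implicit Defensive.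
Import Order.TTheory GRing.Theory Num.Theory.
Local Open Scope ring_scope.

(* Fix [s] and let N be the product of binomials dividing [p s].
   1. Pure states.  For a vector phi and a bipartition alpha, the "exchange
      defect" G(x,y) = phi x phi y - phi (x^alpha y) phi (y^alpha x) satisfies
      sum |G|^2 = 2 (tr^2 - tr sigma_alpha^2), so 8 C^2(phi) is the total mass
      of the defects over the 14 bipartitions.  Restricting phi to a selection
      S keeps exactly the defects on pairs (x,y) with x, y in S, and a nonzero
      defect forces x, y to differ inside and outside alpha; at most N
      selections of size s contain such a pair.  Hence
      sum_S C^2(phi|_S) <= N C^2(phi).
   2. Mixed states.  Every PSD operator has a pure-state decomposition
      (Cholesky, by Schur complements).  A decomposition of rho restricts to a
      decomposition of each substate, and a Minkowski-type inequality gives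
      sum_S C^2(rho_S) <= N (sum_i C(psi_i))^2; passing to the infimum gives
      sum_S C^2(rho_S) <= N C^2(rho).
   3. Corollary 1 is the convex combination of these bounds with weights p s. *)

Lemma card_proper_nonempty : #|[pred a : {set 'I_4} | proper_nonempty a]| = 14%N.
Proof.
have full_ne : [set: 'I_4] != finset.set0.
  by apply/eqP => /setP /(_ ord0); rewrite !inE.
have : #|[set: {set 'I_4}]| = 16 by rewrite -powersetT card_powerset cardsT card_ord.
rewrite (cardsD1 finset.set0) (cardsD1 [set: 'I_4]) !inE /= full_ne => h.
have -> : 14%N = #|[set: {set 'I_4}] :\ finset.set0 :\ [set: 'I_4]|.
  by move: h; rewrite !add1n => -[].
by apply: eq_card => A; rewrite !inE /proper_nonempty andbC andbT.
Qed.

Section PureStates.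
Variables (R : realType) (d : 'I_4 -> nat).
Local Notation C := R[i].
Local Notation T := (basis4 d).

Definition sqmod (z : C) : R := complex.Re z ^+ 2 + complex.Im z ^+ 2.

Lemma mul_conj_sqmod (z : C) : z * z^* = (sqmod z)%:C%C.
Proof.
case: z => a b; rewrite /sqmod /=.
by apply/eqP; rewrite eq_complex /=; apply/andP; split; apply/eqP; ring.
Qed.

Lemma sqmod_ge0 (z : C) : 0 <= sqmod z.
Proof. by rewrite /sqmod addr_ge0 // sqr_ge0. Qed.

Lemma sqmod0 : sqmod 0 = 0.
Proof. by rewrite /sqmod /= expr0n /= addr0. Qed.

Lemma sqmod_eq0 (z : C) : sqmod z = 0 -> z = 0.
Proof.
case: z => a b; rewrite /sqmod /= => h.
have /andP[ha hb] : (a ^+ 2 == 0) && (b ^+ 2 == 0).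
  by rewrite -(paddr_eq0 (sqr_ge0 a) (sqr_ge0 b)) h.
by move: ha hb; rewrite !sqrf_eq0 => /eqP -> /eqP ->.
Qed.

Definition exchange (al : {set 'I_4}) (p : T * T) : T * T :=
  (mix al p.2 p.1, mix al p.1 p.2).

Lemma mixK (al : {set 'I_4}) (x y : T) : mix al (mix al x y) (mix al y x) = x.
Proof. by apply/ffunP => k; rewrite !ffunE; case: (k \in al). Qed.

Lemma exchangeK (al : {set 'I_4}) : involutive (exchange al).
Proof. by case=> x y; rewrite /exchange /= !mixK. Qed.

Lemma sum_exchange (al : {set 'I_4}) (F : T -> T -> C) :
  \sum_(x : T) \sum_(y : T) F x y =
  \sum_(x : T) \sum_(y : T) F (mix al y x) (mix al x y).
Proof.
rewrite !pair_bigA /= (reindex_inj (inv_inj (exchangeK al))) /=.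
by apply: eq_bigr => -[x y] _.
Qed.

Definition defect (phi : vec R d) (al : {set 'I_4}) (x y : T) : C :=
  phi x * phi y - phi (mix al y x) * phi (mix al x y).

Lemma sum_defect_sq (phi : vec R d) (al : {set 'I_4}) :
  \sum_(x : T) \sum_(y : T) defect phi al x y * (defect phi al x y)^* =
  2%:R * (trace (outer phi) ^+ 2 - tr_red_sq al (outer phi)).
Proof.
pose P x y := phi x * phi y.
pose Q x y := phi (mix al y x) * phi (mix al x y).
have PP : trace (outer phi) ^+ 2 = \sum_x \sum_y P x y * (P x y)^*.
  rewrite expr2 /trace /outer mulr_suml; apply: eq_bigr => x _.
  rewrite mulr_sumr; apply: eq_bigr => y _; rewrite /P rmorphM /=; ring.
have PQ : tr_red_sq al (outer phi) = \sum_x \sum_y P x y * (Q x y)^*.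
  rewrite /tr_red_sq /outer; apply: eq_bigr => x _; apply: eq_bigr => y _.
  rewrite /P /Q rmorphM /=; ring.
have QQ : \sum_x \sum_y Q x y * (Q x y)^* = \sum_x \sum_y P x y * (P x y)^*.
  by rewrite (sum_exchange al (fun x y => P x y * (P x y)^*)).
have QP : \sum_x \sum_y Q x y * (P x y)^* = \sum_x \sum_y P x y * (Q x y)^*.
  rewrite (sum_exchange al (fun x y => P x y * (Q x y)^*)) /P /Q.
  by apply: eq_bigr => x _; apply: eq_bigr => y _; rewrite !mixK mulrC.
have -> : \sum_x \sum_y defect phi al x y * (defect phi al x y)^* =
  \sum_x (\sum_y P x y * (P x y)^* - \sum_y P x y * (Q x y)^*
          - \sum_y Q x y * (P x y)^* + \sum_y Q x y * (Q x y)^*).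
  apply: eq_bigr => x _; rewrite -!sumrB -big_split /=.
  by apply: eq_bigr => y _; rewrite /defect /P /Q rmorphB /= !rmorphM /=; ring.
rewrite big_split /= !sumrB QQ QP -PP -PQ; ring.
Qed.

Definition defect_mass (phi : vec R d) : R :=
  \sum_(al | proper_nonempty al) \sum_(x : T) \sum_(y : T) sqmod (defect phi al x y).

Lemma defect_mass_ge0 (phi : vec R d) : 0 <= defect_mass phi.
Proof.
by do 3!(apply: sumr_ge0 => ? _); exact: sqmod_ge0.
Qed.

Lemma conc_vec_sq (phi : vec R d) : conc_vec phi ^+ 2 = defect_mass phi / 8%:R.
Proof.
rewrite /conc_vec; set Q := (14%:R * _ - _).
have -> : Q = (defect_mass phi / 2%:R)%:C%C.
  apply: (@mulfI _ 2%:R); first by rewrite pnatr_eq0.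
  rewrite rmorphM /= fmorphV /= rmorph_nat mulrCA mulfV ?mulr1 ?pnatr_eq0 //.
  rewrite /Q /defect_mass rmorph_sum /=.
  have -> : 14%:R * trace (outer phi) ^+ 2 =
      \sum_(al | proper_nonempty al) trace (outer phi) ^+ 2.
    by rewrite sumr_const card_proper_nonempty mulr_natl.
  rewrite -sumrB mulr_sumr; apply: eq_bigr => al _.
  rewrite -sum_defect_sq rmorph_sum /=; apply: eq_bigr => x _.
  by rewrite rmorph_sum /=; apply: eq_bigr => y _; rewrite mul_conj_sqmod.
rewrite /= expr_div_n sqr_sqrtr; last by rewrite divr_ge0 ?defect_mass_ge0.
by rewrite -mulrA -invfM -natrX -natrM.
Qed.

Definition restrict (S : subsel d) (phi : vec R d) : vec R d :=
  fun x => if in_sel S x then phi x else 0.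

Lemma in_sel_mix (S : subsel d) (al : {set 'I_4}) (x y : T) :
  in_sel S x -> in_sel S y -> in_sel S (mix al x y).
Proof.
move=> /forallP hx /forallP hy; apply/forallP => k; rewrite ffunE.
by case: (k \in al).
Qed.

Lemma defect_restrict (S : subsel d) (phi : vec R d) (al : {set 'I_4}) (x y : T) :
  defect (restrict S phi) al x y =
  if in_sel S x && in_sel S y then defect phi al x y else 0.
Proof.
have back : in_sel S (mix al y x) -> in_sel S (mix al x y) -> in_sel S x && in_sel S y.
  move=> h1 h2; apply/andP; split.
    by rewrite -(mixK al x y); exact: in_sel_mix.
  by rewrite -(mixK al y x); exact: in_sel_mix.
rewrite /defect /restrict.
case hx: (in_sel S x); case hy: (in_sel S y) => /=; first by rewrite !in_sel_mix.
all: case h1: (in_sel S (mix al y x)); case h2: (in_sel S (mix al x y));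
  rewrite ?mulr0 ?mul0r ?subrr //.
all: by move: (back h1 h2); rewrite hx hy.
Qed.

Lemma mix_agree_in (al : {set 'I_4}) (u v : T) :
  (forall k, k \in al -> u k = v k) -> mix al u v = v.
Proof. by move=> h; apply/ffunP => k; rewrite ffunE; case: ifP => // /h. Qed.

Lemma mix_agree_out (al : {set 'I_4}) (u v : T) :
  (forall k, k \notin al -> u k = v k) -> mix al u v = u.
Proof. by move=> h; apply/ffunP => k; rewrite ffunE; case: ifPn => // /h. Qed.

Definition straddles (al : {set 'I_4}) (x y : T) : Prop :=
  (exists2 k, k \in al & x k != y k) /\ (exists2 k, k \notin al & x k != y k).

(* A nonzero defect can only occur on a straddling pair: if x and y agree on
   alpha or off alpha, the exchange maps (x, y) to (x, y) or to (y, x). *)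
Lemma defect_straddles (phi : vec R d) (al : {set 'I_4}) (x y : T) :
  defect phi al x y != 0 -> straddles al x y.
Proof.
move=> hG; split; apply/exists_inP; apply: contraNT hG => /exists_inPn agree.
  have agree_in k : k \in al -> y k = x k.
    by move=> /agree /negPn /eqP ->.
  rewrite /defect (mix_agree_in agree_in) (mix_agree_in (fun k hk => esym (agree_in k hk))).
  by rewrite subrr.
have agree_out k : k \notin al -> y k = x k.
  by move=> hk; have /negPn /eqP -> := agree k (hk : k \in [pred k | k \notin al]).
rewrite /defect (mix_agree_out agree_out) (mix_agree_out (fun k hk => esym (agree_out k hk))).
by rewrite mulrC subrr.
Qed.

Definition sel_count (s : nat) (x y : T) : nat :=
  #|[set S : subsel d | sel_size s S && in_sel S x && in_sel S y]|.

Lemma sum_defect_mass_restrict (s : nat) (phi : vec R d) :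
  \sum_(S : subsel d | sel_size s S) defect_mass (restrict S phi) =
  \sum_(al | proper_nonempty al) \sum_(x : T) \sum_(y : T)
     sqmod (defect phi al x y) * (sel_count s x y)%:R.
Proof.
rewrite /defect_mass exchange_big; apply: eq_bigr => al _.
rewrite exchange_big; apply: eq_bigr => x _.
rewrite exchange_big; apply: eq_bigr => y _.
under eq_bigr do rewrite defect_restrict (fun_if sqmod) sqmod0.
rewrite -big_mkcondr sumr_const mulr_natr /sel_count.
by congr (_ *+ _); apply: eq_card => S; rewrite !inE unfold_in /= andbA.
Qed.

Lemma pure_state_bound (s N : nat) (phi : vec R d) :
  (forall al x y, straddles al x y -> (sel_count s x y <= N)%N) ->
  \sum_(S : subsel d | sel_size s S) conc_vec (restrict S phi) ^+ 2
    <= N%:R * conc_vec phi ^+ 2.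
Proof.
move=> hN; under eq_bigr do rewrite conc_vec_sq.
rewrite -mulr_suml sum_defect_mass_restrict conc_vec_sq mulrA.
rewrite ler_wpM2r ?invr_ge0 ?ler0n // /defect_mass.
rewrite mulr_sumr; apply: ler_sum => al _.
rewrite mulr_sumr; apply: ler_sum => x _.
rewrite mulr_sumr; apply: ler_sum => y _.
have [->|hG] := eqVneq (defect phi al x y) 0; first by rewrite sqmod0 mul0r mulr0.
by rewrite mulrC ler_wpM2r ?sqmod_ge0 // ler_nat (hN al x y (defect_straddles hG)).
Qed.
End PureStates.

Section PsdDecomposition.
Variables (R : realType) (d : 'I_4 -> nat).
Local Notation C := R[i].
Local Notation T := (basis4 d).

Definition qform (s : op R d) (u v : vec R d) : C :=
  \sum_(x : T) \sum_(y : T) (u x)^* * s x y * v y.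

Definition delta (x : T) (a : C) : vec R d := fun z => if z == x then a else 0.

Definition vadd (u v : vec R d) : vec R d := fun z => u z + v z.

Lemma qform_addl (s : op R d) u1 u2 v :
  qform s (vadd u1 u2) v = qform s u1 v + qform s u2 v.
Proof.
rewrite /qform -big_split; apply: eq_bigr => x _; rewrite -big_split.
by apply: eq_bigr => y _; rewrite /vadd rmorphD /=; ring.
Qed.

Lemma qform_addr (s : op R d) u v1 v2 :
  qform s u (vadd v1 v2) = qform s u v1 + qform s u v2.
Proof.
rewrite /qform -big_split; apply: eq_bigr => x _; rewrite -big_split.
by apply: eq_bigr => y _; rewrite /vadd /= mulrDr.
Qed.

Lemma qform_deltal (s : op R d) x a v :
  qform s (delta x a) v = a^* * \sum_(y : T) s x y * v y.
Proof.
rewrite /qform (bigD1 x) //= [X in _ + X]big1 => [|z hz]; last first.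
  by apply: big1 => w _; rewrite /delta (negbTE hz) conjC0 !mul0r.
rewrite addr0 mulr_sumr; apply: eq_bigr => y _; by rewrite /delta eqxx mulrA.
Qed.

Lemma qform_deltar (s : op R d) x a u :
  qform s u (delta x a) = (\sum_(y : T) (u y)^* * s y x) * a.
Proof.
rewrite /qform mulr_suml; apply: eq_bigr => z _.
rewrite (bigD1 x) //= [X in _ + X]big1 => [|w hw]; last by rewrite /delta (negbTE hw) mulr0.
by rewrite addr0 /delta eqxx.
Qed.

Lemma qform_delta (s : op R d) x a y b :
  qform s (delta x a) (delta y b) = a^* * s x y * b.
Proof.
rewrite qform_deltal (bigD1 y) //= big1 => [|z hz]; last by rewrite /delta (negbTE hz) mulr0.
by rewrite addr0 /delta eqxx mulrA.
Qed.

Lemma qform_two (s : op R d) x a y b :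
  qform s (vadd (delta x a) (delta y b)) (vadd (delta x a) (delta y b)) =
  a^* * s x x * a + a^* * s x y * b + b^* * s y x * a + b^* * s y y * b.
Proof. by rewrite !qform_addl !qform_addr !qform_delta; ring. Qed.

Lemma psd_diag (s : op R d) : psd s -> forall x, 0 <= s x x.
Proof.
move=> h x; have := h (delta x 1).
by rewrite -/(qform s (delta x 1) (delta x 1)) qform_delta conjC1 mul1r mulr1.
Qed.

(* A PSD operator is Hermitian (test the form on |x> + |y> and |x> + i|y>). *)
Lemma psd_herm (s : op R d) : psd s -> forall x y, s y x = (s x y)^*.
Proof.
move=> h x y.
have h1 := h (vadd (delta x 1) (delta y 1)).
have h2 := h (vadd (delta x 1) (delta y 'i)).
rewrite -/(qform s _ _) qform_two in h1; rewrite -/(qform s _ _) qform_two in h2.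
move: h1 h2 (psd_diag h x) (psd_diag h y); rewrite !conjC1 !mul1r !mulr1 !lecE.
case: (s x y) => a b; case: (s y x) => c e; case: (s x x) => p q; case: (s y y) => r t.
rewrite /= => /andP[/eqP i1 _] /andP[/eqP i2 _] /andP[/eqP hq _] /andP[/eqP ht _].
by apply/eqP; rewrite eq_complex /=; apply/andP; split; apply/eqP; lra.
Qed.

(* A zero diagonal entry of a PSD operator forces a zero row: otherwise the
   form is negative on c |x> + |y> for a suitable c. *)
Lemma psd_zero_row (s : op R d) : psd s -> forall x, s x x = 0 -> forall y, s x y = 0.
Proof.
move=> h x hx y; apply/eqP; apply: contraT => hne.
have hyy := psd_diag h y.
set a := complex.Re (s x y); set b := complex.Im (s x y).
set k := (complex.Re (s y y) + 1) / (2%:R * (a ^+ 2 + b ^+ 2)).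
have h1 := h (vadd (delta x (Complex (- (k * a)) (- (k * b)))) (delta y 1)).
rewrite -/(qform s _ _) qform_two hx (psd_herm h x y) conjC1 in h1.
have hab : a ^+ 2 + b ^+ 2 != 0.
  by apply: contra hne => /eqP hz; apply/eqP; apply: sqmod_eq0; exact: hz.
have hk : k * (2%:R * (a ^+ 2 + b ^+ 2)) = complex.Re (s y y) + 1.
  by rewrite /k mulfVK // mulf_neq0 // pnatr_eq0.
move: h1 hyy hk; rewrite /k /a /b.
case: (s x y) => a' b'; case: (s y y) => r t.
rewrite /= !lecE /= => /andP[_ h1] /andP[_ hr].
by set K := ((r + 1) / _) in h1 *; nra.
Qed.

Lemma qform_sub_outer (s : op R d) (v u : vec R d) :
  qform (fun z w => s z w - outer v z w) u u =
  qform s u u - (\sum_(z : T) (u z)^* * v z) * (\sum_(w : T) (v w)^* * u w).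
Proof.
rewrite /qform mulr_suml -sumrB; apply: eq_bigr => z _.
rewrite mulr_sumr -sumrB; apply: eq_bigr => w _.
by rewrite /outer; ring.
Qed.

(* Schur complement: if r is a real square root of the pivot s x0 x0 != 0,
   then s - |v><v| is PSD for v = s(., x0) / r, since its form at u equals the
   form of s at u - (<x0|s|u> / s x0 x0) |x0>. *)
Lemma psd_schur (s : op R d) (x0 : T) (r : C) :
  psd s -> r != 0 -> r^* = r -> r * r = s x0 x0 ->
  psd (fun z w => s z w - outer (fun z => s z x0 / r) z w).
Proof.
move=> h hr0 hrc hrr u; rewrite -/(qform _ u u) qform_sub_outer.
pose beta := \sum_(w : T) s x0 w * u w.
pose c := - beta / s x0 x0.
have hs0 : s x0 x0 != 0 by rewrite -hrr mulf_neq0.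
have col : \sum_(y : T) (u y)^* * s y x0 = beta^*.
  rewrite /beta rmorph_sum /=; apply: eq_bigr => y _.
  by rewrite rmorphM /= mulrC (psd_herm h x0 y).
have left : \sum_(z : T) (u z)^* * (s z x0 / r) = beta^* / r.
  by rewrite -col mulr_suml; apply: eq_bigr => z _; rewrite mulrA.
have right : \sum_(w : T) (s w x0 / r)^* * u w = beta / r.
  rewrite /beta mulr_suml; apply: eq_bigr => w _.
  by rewrite rmorphM /= fmorphV /= hrc (psd_herm h x0 w) conjCK; ring.
have hc : c^* = - beta^* / s x0 x0.
  by rewrite /c rmorphM /= fmorphV /= rmorphN /= -hrr rmorphM /= hrc.
have := h (vadd u (delta x0 c)).
rewrite -/(qform s _ _) !qform_addl !qform_addr qform_delta qform_deltal qform_deltar.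
rewrite col left right hc -/beta; congr (0 <= _).
by rewrite /c -hrr; field.
Qed.

Lemma cholesky_step (s : op R d) (x0 : T) : psd s -> s x0 x0 != 0 ->
  exists v : vec R d,
    [/\ psd (fun z w => s z w - outer v z w),
        (forall z, s z z = 0 -> s z z - outer v z z = 0) &
        s x0 x0 - outer v x0 x0 = 0].
Proof.
move=> h hne.
have ha : s x0 x0 = (complex.Re (s x0 x0))%:C%C.
  by move: (psd_diag h x0); case: (s x0 x0) => a b; rewrite lecE /= => /andP[/eqP -> _].
set ra := complex.Re (s x0 x0) in ha.
have hra : 0 < ra.
  move: (psd_diag h x0) hne; rewrite ha lecE /= => /andP[_ hr] hne.
  by rewrite lt_def hr andbT; apply: contra hne => /eqP e; rewrite e.
pose r : C := (Num.sqrt ra)%:C%C.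
have hr0 : r != 0.
  apply/eqP => /eqP; rewrite eq_complex /= eqxx andbT sqrtr_eq0 leNgt hra.
  by [].
have hrr : r * r = s x0 x0 by rewrite /r -rmorphM /= -expr2 sqr_sqrtr ?ltW // ha.
have hrc : r^* = r by apply/eqP; rewrite eq_complex /= oppr0 !eqxx.
have hout z w : outer (fun z => s z x0 / r) z w = s z x0 * s x0 w / s x0 x0.
  rewrite /outer rmorphM /= fmorphV /= hrc (psd_herm h x0 w) conjCK -hrr.
  by field.
exists (fun z => s z x0 / r); split.
- exact: psd_schur.
- by move=> z hz; rewrite hout (psd_zero_row h hz x0) !mul0r subr0.
- by rewrite hout mulrAC divff // mul1r subrr.
Qed.

Lemma psd_zero_diag_decomposition (s : op R d) :
  psd s -> (forall x, s x x = 0) -> decomposition s [::].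
Proof. by move=> h hz x y; rewrite big_nil; apply: (psd_zero_row h). Qed.

Lemma psd_decomposition (s : op R d) : psd s -> exists psis, decomposition s psis.
Proof.
move: {2}#|_| (leqnn #|[pred x | s x x != 0]|) => n.
elim: n s => [|n IH] s hc h; case: (pickP [pred x | s x x != 0]) => [x0 hx0|zero_diag];
  try by exists [::]; apply: psd_zero_diag_decomposition => // x; apply/eqP/negbFE/zero_diag.
  by move: hc; rewrite leqn0 => /eqP/card0_eq/(_ x0); rewrite inE; move: hx0 => /= ->.
have [v [hv hzero hpivot]] := cholesky_step h hx0.
have [ps hps] : exists psis, decomposition (fun z w => s z w - outer v z w) psis.
  apply: IH hv.
  have pivot : s x0 x0 != 0 := hx0.
  rewrite -ltnS (leq_trans _ hc) // [X in (_ < X)%N](cardD1 x0) inE pivot add1n ltnS.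
  apply: subset_leq_card; apply/fintype.subsetP => z; rewrite !inE => hz.
  apply/andP; split; first by apply: contraNneq hz => ->; rewrite hpivot.
  by apply: contra hz => /eqP /hzero ->.
by exists (v :: ps) => x y; rewrite big_cons -hps; ring.
Qed.
End PsdDecomposition.

Section SquareSumBounds.
Variables (R : realFieldType) (I : finType) (P : pred I) (N : R).

Lemma sum_sq_le0 (u : I -> R) :
  \sum_(i | P i) u i ^+ 2 <= 0 -> forall i, P i -> u i = 0.
Proof.
move=> h i Pi; apply/eqP; rewrite -sqrf_eq0; apply/eqP.
apply: (psumr_eq0P (fun j _ => sqr_ge0 (u j))) Pi.
by apply/eqP; rewrite eq_le h sumr_ge0 // => j _; exact: sqr_ge0.
Qed.

(* Cauchy-Schwarz in the form needed: the bounds sum u^2 <= N a^2 and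
   sum v^2 <= N b^2 give sum u v <= N a b (expand sum (b u - a v)^2 >= 0). *)
Lemma sum_mul_bound (u v : I -> R) (a b : R) : 0 <= a -> 0 <= b ->
  \sum_(i | P i) u i ^+ 2 <= N * a ^+ 2 -> \sum_(i | P i) v i ^+ 2 <= N * b ^+ 2 ->
  \sum_(i | P i) u i * v i <= N * a * b.
Proof.
move=> ha hb hu hv.
have [a0|a_neq0] := eqVneq a 0.
  rewrite a0 expr0n /= mulr0 in hu.
  by rewrite a0 mulr0 mul0r big1 // => i Pi; rewrite (sum_sq_le0 hu Pi) mul0r.
have [b0|b_neq0] := eqVneq b 0.
  rewrite b0 expr0n /= mulr0 in hv.
  by rewrite b0 mulr0 big1 // => i Pi; rewrite (sum_sq_le0 hv Pi) mulr0.
have hab : 0 < 2%:R * (a * b) by rewrite !mulr_gt0 // lt_def ?a_neq0 ?b_neq0.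
have expand : \sum_(i | P i) (b * u i - a * v i) ^+ 2 =
    b ^+ 2 * \sum_(i | P i) u i ^+ 2 - 2%:R * (a * b) * \sum_(i | P i) u i * v i
    + a ^+ 2 * \sum_(i | P i) v i ^+ 2.
  by rewrite !mulr_sumr -sumrB -big_split /=; apply: eq_bigr => i _; ring.
have sq_ge0 : 0 <= \sum_(i | P i) (b * u i - a * v i) ^+ 2.
  by apply: sumr_ge0 => i _; exact: sqr_ge0.
have hu' := ler_wpM2l (sqr_ge0 b) hu; have hv' := ler_wpM2l (sqr_ge0 a) hv.
rewrite -(ler_pM2l hab); rewrite expand in sq_ge0.
move: sq_ge0 hu' hv'; set U := \sum_(i | P i) u i ^+ 2; set V := \sum_(i | P i) v i ^+ 2.
set X := \sum_(i | P i) u i * v i => *.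
have -> : 2%:R * (a * b) * (N * a * b) = b ^+ 2 * (N * a ^+ 2) + a ^+ 2 * (N * b ^+ 2).
  by ring.
lra.
Qed.

(* Triangle inequality for the seminorm sqrt (sum_i u_i^2 / N), without roots. *)
Lemma sq_sum_bound_add (u v : I -> R) (a b : R) : 0 <= a -> 0 <= b ->
  \sum_(i | P i) u i ^+ 2 <= N * a ^+ 2 -> \sum_(i | P i) v i ^+ 2 <= N * b ^+ 2 ->
  \sum_(i | P i) (u i + v i) ^+ 2 <= N * (a + b) ^+ 2.
Proof.
move=> ha hb hu hv; have huv := sum_mul_bound ha hb hu hv.
have -> : \sum_(i | P i) (u i + v i) ^+ 2 = \sum_(i | P i) u i ^+ 2
    + 2%:R * \sum_(i | P i) u i * v i + \sum_(i | P i) v i ^+ 2.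
  by rewrite mulr_sumr -!big_split /=; apply: eq_bigr => i _; ring.
have -> : N * (a + b) ^+ 2 = N * a ^+ 2 + 2%:R * (N * a * b) + N * b ^+ 2 by ring.
lra.
Qed.

Lemma sq_sum_bound (J : Type) (r : seq J) (f : J -> I -> R) (w : J -> R) :
  (forall j, 0 <= w j) ->
  (forall j, \sum_(i | P i) f j i ^+ 2 <= N * w j ^+ 2) ->
  \sum_(i | P i) (\sum_(j <- r) f j i) ^+ 2 <= N * (\sum_(j <- r) w j) ^+ 2.
Proof.
move=> hw hf; elim: r => [|j r IH].
  by rewrite big_nil expr0n /= mulr0 big1 // => i _; rewrite big_nil expr0n.
under eq_bigr do rewrite big_cons.
rewrite big_cons; apply: sq_sum_bound_add => //.
by apply: sumr_ge0.
Qed.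
End SquareSumBounds.


(* Number of s-subsets of an n-set through two given points / one given point. *)
Definition through2 (s n : nat) : nat := 'C(n - 2, s - 2).
Definition through1 (s n : nat) : nat := 'C(n - 1, s - 1).

(* k-subsets of T containing B are determined by the (k - #|B|)-subset A :\: B
   of ~: B. *)
Lemma card_supersets (T : finType) (B : {set T}) (k : nat) :
  (#|[set A : {set T} | (#|A| == k) && (B \subset A)]| <=
   'C(#|T| - #|B|, k - #|B|))%N.
Proof.
set X := [set A : {set T} | _].
have inj : {in X &, injective (fun A => A :\: B)}.
  move=> A A'; rewrite !inE => /andP[_ hA] /andP[_ hA'] e.
  apply/setP => z; have /setP /(_ z) := e; rewrite !inE.
  case hz: (z \in B) => //= _.
  by rewrite (fintype.subsetP hA _ hz) (fintype.subsetP hA' _ hz).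
rewrite -(card_in_imset inj) -(cardsC B) addKn -cards_draws.
apply: subset_leq_card; apply/fintype.subsetP => _ /imsetP[A hA ->].
by move: hA; rewrite !inE => /andP[/eqP hk hB]; rewrite subsetDr cardsDS // hk eqxx.
Qed.

Lemma card_sets_through (n s : nat) (a b : 'I_n) : (2 <= s)%N ->
  (#|[set A : {set 'I_n} | [&& #|A| == s, a \in A & b \in A]]| <=
   if a == b then through1 s n else through2 s n)%N.
Proof.
move=> hs.
have -> : [set A : {set 'I_n} | [&& #|A| == s, a \in A & b \in A]] =
          [set A : {set 'I_n} | (#|A| == s) && ([set a; b] \subset A)].
  apply/setP => A; rewrite !inE; congr (_ && _).
  apply/andP/fintype.subsetP => [[ha hb] z|h]; first by rewrite !inE => /orP[] /eqP ->.
  by split; apply: h; rewrite !inE eqxx ?orbT.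
by apply: leq_trans (card_supersets _ _) _; rewrite card_ord cards2; case: eqP.
Qed.

(* A selection is a choice of one subset per factor, so selections through x
   and y are counted by the product of the factorwise counts. *)
Lemma sel_count_le_prod (d : 'I_4 -> nat) (s : nat) (x y : basis4 d) :
  (sel_count s x y <=
   \prod_(k : 'I_4) #|[set A : {set 'I_(d k)} | [&& #|A| == s, x k \in A & y k \in A]]|)%N.
Proof.
rewrite -(cardsXn (fun k => [set A : {set 'I_(d k)} | [&& #|A| == s, x k \in A & y k \in A]])).
apply: subset_leq_card; apply/fintype.subsetP => S.
rewrite !inE => /andP[/andP[/forallP h1 /forallP h2] /forallP h3].
by apply/forallP => k; rewrite inE (h1 k) (h2 k) (h3 k).
Qed.

Lemma through_ratio (s n : nat) : (2 <= s <= n)%N ->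
  ((n - 1) * through2 s n = (s - 1) * through1 s n)%N.
Proof.
case/andP=> hs hn; rewrite /through2 /through1.
have := mul_bin_diag (n - 1) (s - 2).
have -> : (n - 1).-1 = (n - 2)%N by lia.
by have -> : (s - 2).+1 = (s - 1)%N by lia.
Qed.

Lemma through2_le_through1 (s n : nat) : (2 <= s <= n)%N -> (through2 s n <= through1 s n)%N.
Proof.
move=> hsn; have e := through_ratio hsn; case/andP: hsn => hs hn.
have hs1 : (0 < s - 1)%N by lia.
by rewrite -(leq_pmul2l hs1) -e leq_mul2r; apply/orP; right; lia.
Qed.

(* The ratio through2 / through1 = (s - 1) / (n - 1) decreases with n. *)
Lemma through_ratio_mono (s n m : nat) : (2 <= s <= n)%N -> (n <= m)%N ->
  (through2 s m * through1 s n <= through2 s n * through1 s m)%N.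
Proof.
move=> hsn hnm; have hsm : (2 <= s <= m)%N by case/andP: hsn => -> /leq_trans ->.
have hs1 : (0 < s - 1)%N by case/andP: hsn; lia.
rewrite -(leq_pmul2l hs1) mulnCA -(through_ratio hsn) [X in (_ <= X)%N]mulnCA.
rewrite -(through_ratio hsm) mulnCA [X in (_ <= X)%N]mulnCA.
by apply: leq_mul; [lia | rewrite mulnC].
Qed.

(* Four factors, each weighted b k except two distinct marked ones weighted
   a k: if a k / b k decreases along k, marking the first two is the worst. *)
Lemma prod_two_marked (a b : nat -> nat) (i j : nat) :
  (i < 4)%N -> (j < 4)%N -> i != j ->
  (forall k l, (k <= l < 4)%N -> a l * b k <= a k * b l)%N ->
  (\prod_(k < 4) (if (k == i :> nat) || (k == j :> nat) then a k else b k) <= a 0 * a 1 * b 2 * b 3)%N.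
Proof.
move=> hi hj hij mono.
have m02 := mono 0%N 2%N isT; have m03 := mono 0%N 3%N isT.
have m12 := mono 1%N 2%N isT; have m13 := mono 1%N 3%N isT.
rewrite !big_ord_recl big_ord0 /= /bump /= ?(addn0, add1n).
move: hi hj hij; case: i => [|[|[|[|i]]]] //; case: j => [|[|[|[|j]]]] // _ _ _.
all: rewrite [_ == _]/eq_op /=.
all: first [ lia
 | (have := leq_mul m12 (leqnn (a 0 * b 3)%N); lia)
 | (have := leq_mul m13 (leqnn (a 0 * b 2)%N); lia)
 | (have := leq_mul m02 (leqnn (a 1 * b 3)%N); lia)
 | (have := leq_mul m03 (leqnn (a 1 * b 2)%N); lia)
 | (have := leq_mul m02 m13; lia) ].
Qed.

(* For 2 <= d1 <= d2 <= d3 <= d4 and 2 <= s <= d1, at most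
   N = C(d1-2,s-2) C(d2-2,s-2) C(d3-1,s-1) C(d4-1,s-1) selections of size s
   contain a straddling pair: two coordinates where x, y differ contribute a
   through2 factor, and the worst case puts them on the two smallest factors. *)
Lemma straddle_count (d1 d2 d3 d4 : nat)
  (hd : [/\ (2 <= d1)%N, (d1 <= d2)%N, (d2 <= d3)%N & (d3 <= d4)%N])
  (s : nat) (hs : (2 <= s <= d1)%N) (al : {set 'I_4}) (x y : basis4 (dims d1 d2 d3 d4)) :
  straddles al x y ->
  (sel_count s x y <=
   'C(d1 - 2, s - 2) * 'C(d2 - 2, s - 2) * 'C(d3 - 1, s - 1) * 'C(d4 - 1, s - 1))%N.
Proof.
case=> -[i hi hxi] [j hj hxj].
have hij : val i != val j by apply/eqP => /val_inj e; move: hj; rewrite -e hi.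
pose D k := nth 0%N [:: d1; d2; d3; d4] k.
have D_mono k l : (k <= l < 4)%N -> (D k <= D l)%N.
  case: hd => h1 h2 h3 h4; rewrite /D.
  by case: k => [|[|[|[|k]]]]; case: l => [|[|[|[|l]]]] //= hkl; lia.
have s_le_D k : (k < 4)%N -> (2 <= s <= D k)%N.
  by move=> hk; rewrite (leq_trans _ (D_mono 0%N k hk)) ?andbT //; case/andP: hs.
pose marked (k : 'I_4) := (k == i :> nat) || (k == j :> nat).
apply: leq_trans (sel_count_le_prod s x y) _.
apply: (@leq_trans (\prod_(k < 4)
   (if marked k then through2 s (D k) else through1 s (D k)))).
  apply: leq_prod => k _; apply: leq_trans (card_sets_through (x k) (y k) (proj1 (andP hs))) _.
  case: (boolP (marked k)) => [/orP[] /eqP /val_inj ->|_].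
  - by rewrite (negbTE hxi).
  - by rewrite (negbTE hxj).
  - by case: eqP => // _; apply: through2_le_through1; exact: s_le_D.
apply: (prod_two_marked (a := fun k => through2 s (D k)) (b := fun k => through1 s (D k)));
  [exact: ltn_ord | exact: ltn_ord | exact: hij |].
by move=> k l /andP[hkl hl]; apply: through_ratio_mono;
  [apply: s_le_D; exact: leq_ltn_trans hl | apply: D_mono; rewrite hkl].
Qed.

Lemma inf_sq_bound (R : realType) (E : set R) (L N : R) :
  (exists r, E r) -> (forall r, E r -> 0 <= r) -> 0 <= L -> 0 < N ->
  (forall r, E r -> L <= N * r ^+ 2) -> L <= N * inf E ^+ 2.
Proof.
move=> [r0 Er0] E_ge0 hL hN bound.
have LN_ge0 : 0 <= L / N by rewrite divr_ge0 // ltW.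
have lb : Num.sqrt (L / N) <= inf E.
  apply: lb_le_inf; first by exists r0.
  move=> r Er; rewrite -(ger0_norm (E_ge0 r Er)) -sqrtr_sqr ler_sqrt ?sqr_ge0 //.
  by rewrite ler_pdivrMr // mulrC bound.
rewrite mulrC -ler_pdivrMr // -(sqr_sqrtr LN_ge0) ler_sqr ?nnegrE ?sqrtr_ge0 //.
exact: le_trans (sqrtr_ge0 _) lb.
Qed.

Section MixedStates.
Variables (R : realType) (d : 'I_4 -> nat).

Lemma conc_vec_ge0 (phi : vec R d) : 0 <= conc_vec phi.
Proof. by rewrite /conc_vec divr_ge0 ?sqrtr_ge0 ?ler0n. Qed.

Lemma conc_le (s : op R d) (psis : seq (vec R d)) : decomposition s psis ->
  conc s <= \sum_(psi <- psis) conc_vec psi.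
Proof.
move=> hd; apply: ge_inf; last by exists psis.
by exists 0 => r [ps [_ ->]]; apply: sumr_ge0 => ? _; exact: conc_vec_ge0.
Qed.

Lemma conc_ge0 (s : op R d) (psis : seq (vec R d)) : decomposition s psis -> 0 <= conc s.
Proof.
move=> hd.
apply: lb_le_inf; first by exists (\sum_(psi <- psis) conc_vec psi); exists psis.
by move=> r [ps [_ ->]]; apply: sumr_ge0 => ? _; exact: conc_vec_ge0.
Qed.

Lemma substate_decomposition (S : subsel d) (rho : op R d) (psis : seq (vec R d)) :
  decomposition rho psis -> decomposition (substate S rho) (map (restrict S) psis).
Proof.
move=> hd x y; rewrite /substate hd big_map.
case hx: (in_sel S x); case hy: (in_sel S y) => /=;
  apply/esym; (under eq_bigr do rewrite /outer /restrict hx hy); rewrite //;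
  apply: big1 => psi _; rewrite ?mul0r ?conjC0 ?mulr0 //.
Qed.

Lemma decomposition_bound (s N : nat) (rho : op R d) (psis : seq (vec R d)) :
  (forall al (x y : basis4 d), straddles al x y -> (sel_count s x y <= N)%N) ->
  decomposition rho psis ->
  \sum_(S : subsel d | sel_size s S) conc (substate S rho) ^+ 2
    <= N%:R * (\sum_(psi <- psis) conc_vec psi) ^+ 2.
Proof.
move=> hN hd.
apply: le_trans (_ : \sum_(S : subsel d | sel_size s S)
   (\sum_(psi <- psis) conc_vec (restrict S psi)) ^+ 2 <= _).
  apply: ler_sum => S _; have hdS := substate_decomposition S hd.
  have sum_ge0 : 0 <= \sum_(psi <- psis) conc_vec (restrict S psi).
    by apply: sumr_ge0 => ? _; exact: conc_vec_ge0.
  rewrite ler_sqr ?nnegrE ?(conc_ge0 hdS) //.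
  by have := conc_le hdS; rewrite big_map.
apply: (sq_sum_bound psis (f := fun psi S => conc_vec (restrict S psi)) (w := @conc_vec R d)).
  exact: conc_vec_ge0.
by move=> psi; exact: pure_state_bound.
Qed.

Lemma mixed_state_bound (s N : nat) (rho : op R d) :
  psd rho -> (0 < N)%N ->
  (forall al (x y : basis4 d), straddles al x y -> (sel_count s x y <= N)%N) ->
  \sum_(S : subsel d | sel_size s S) conc (substate S rho) ^+ 2 <= N%:R * conc rho ^+ 2.
Proof.
move=> hrho hN0 hN; have [psis0 hd0] := psd_decomposition hrho.
apply: inf_sq_bound; first by exists (\sum_(psi <- psis0) conc_vec psi); exists psis0.
- by move=> r [ps [_ ->]]; apply: sumr_ge0 => ? _; exact: conc_vec_ge0.
- by apply: sumr_ge0 => S _; exact: sqr_ge0.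
- by rewrite ltr0n.
- by move=> r [ps [hps ->]]; exact: decomposition_bound hN hps.
Qed.
End MixedStates.

Theorem corollary1 (R : realType) (d1 d2 d3 d4 : nat)
  (hd : [/\ (2 <= d1)%N, (d1 <= d2)%N, (d2 <= d3)%N & (d3 <= d4)%N])
  (rho : op R (dims d1 d2 d3 d4))
  (hrho : density rho)
  (m : nat) (hm : (2 <= m <= d1)%N)
  (p : nat -> R)
  (hp : forall s, (2 <= s <= m)%N -> 0 <= p s <= 1)
  (hpsum : \sum_(2 <= s < m.+1) p s = 1) :
  conc rho ^+ 2 >=
  \sum_(2 <= s < m.+1)
     p s / ('C(d1 - 2, s - 2) * 'C(d2 - 2, s - 2)
            * 'C(d3 - 1, s - 1) * 'C(d4 - 1, s - 1))%:R
     * \sum_(S : subsel (dims d1 d2 d3 d4) | sel_size s S)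
          conc (substate S rho) ^+ 2.
Proof.
have -> : conc rho ^+ 2 = (\sum_(2 <= s < m.+1) p s) * conc rho ^+ 2.
  by rewrite hpsum mul1r.
rewrite mulr_suml.
apply: ler_sum_nat => s /andP[hs2 hsm]; rewrite ltnS in hsm.
have hs : (2 <= s <= d1)%N by rewrite hs2 (leq_trans hsm) //; case/andP: hm.
set N := ('C(d1 - 2, s - 2) * _ * _ * _)%N.
have N_gt0 : (0 < N)%N.
  by case: hd => *; case/andP: hs => *; rewrite !muln_gt0 !bin_gt0; lia.
have /andP[ps_ge0 _] := hp s (introT andP (conj hs2 hsm)).
rewrite -mulrA ler_wpM2l // ler_pdivrMl ?ltr0n //.
apply: mixed_state_bound => //; first exact: hrho.1.
by move=> al x y; exact: straddle_count.
Qed.
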